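(* Let $K$ be $\mathbb{Q}$ or an imaginary quadratic field with ring of integers $R$, let $M=\begin{pmatrix}\alpha&\beta\\ \overline{\beta}&\gamma\end{pmatrix}\in R^{2\times 2}$ be positive definite hermitian, with $\det M=\Delta\varepsilon$ as in the context, and let $\lambda=\nu\Delta$ for a positive integer $\nu$. Then: (1) If $(a_1,a_2)\in R^2\times R^2$ is a $Q$-orthobalanced basis of norm $\lambda$ and $\delta\in K$ satisfies $a_2=(Ma_1)_\perp/\delta$, then $\nu\delta\in R$. (2) For $\delta\in\frac1\nu R$ with $|\delta|^2=\Delta$, there exists a $Q$-orthobalanced basis in $R^2\times R^2$ of norm $\lambda$ and type $\delta$ if and only if there exist $u,v\in S$ with $uv=\nu(\beta+\delta\sqrt{\varepsilon}\,j)$, $|u|^2=\alpha\nu$ and $|v|^2=\gamma\nu$. (3) If $K$ has class number one, then every $a_1\in R^2$ with $Q(a_1)=\lambda$ can be extended to a $Q$-orthobalanced basis $(a_1,a_2)\in R^2\times R^2$ of norm $\lambda$.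
   Context: $Q(v)=v^*Mv$. A rational number is an absolute square in $K$ if it equals $|y|^2$ for some $y\in K$; $\det M=\Delta\varepsilon$ with $\Delta\in\mathbb{Q}$ an absolute square in $K$ and $\varepsilon$ a positive integer whose only positive divisor that is an absolute square in $K$ is $1$. A pair $(a_1,a_2)$ is a $Q$-orthobalanced basis of norm $\lambda$ if $A^*MA=\lambda\,\mathrm{diag}(1,\varepsilon)$ for $A=(a_1|a_2)$; it is of type $\delta$ if $a_2=(Ma_1)_\perp/\delta$ where $(x,y)^T_\perp:=(-\overline{y},\overline{x})^T$. $K\subseteq\mathbb{C}$ with $\mathbb{C}=\mathbb{R}+\mathbb{R}i$ embedded in the Hamilton quaternions $\mathbb{H}$; $S:=\{r+s\sqrt{\varepsilon}\,j: r,s\in R\}\subseteq\mathbb{H}$, and $|\cdot|$ is the quaternion norm. *)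

From mathcomp Require Import all_boot all_order all_algebra algC algnum.
Set Implicit Arguments. Unset Strict Implicit. Unset Printing Implicit Defensive.
Import Order.TTheory GRing.Theory Num.Theory.
Local Open Scope ring_scope.

(* Parameter D : int encodes K = Q(sqrt D):  D = 1 gives K = Q,
   D < 0 squarefree gives the imaginary quadratic field Q(sqrt D). *)
Definition sqfree (n : nat) : Prop := forall p : nat, prime p -> ~~ (p ^ 2 %| n)%N.
Definition admissible_param (D : int) : Prop :=
  D = 1 \/ (D < 0 /\ sqfree `|D|%N).

Definition inK (D : int) (x : algC) : Prop :=
  exists a b : rat, x = ratr a + ratr b * sqrtC (D%:~R).

Definition inR (D : int) (x : algC) : Prop := inK D x /\ x \in Aint.

Definition abs_square (D : int) (q : rat) : Prop :=
  exists y : algC, inK D y /\ ratr q = `|y| ^+ 2.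

Definition ideal_of (D : int) (I : algC -> Prop) : Prop :=
  [/\ forall x, I x -> inR D x, I 0,
      forall x y, I x -> I y -> I (x + y) &
      forall r x, inR D r -> I x -> I (r * x)].
Definition class_number_one (D : int) : Prop :=
  forall I, ideal_of D I ->
    exists g, inR D g /\ forall x, I x <-> exists r, inR D r /\ x = g * r.

Definition ctr (m n : nat) (A : 'M[algC]_(m, n)) : 'M[algC]_(n, m) :=
  (map_mx Num.conj A)^T.

Definition vecR (D : int) (v : 'cV[algC]_2) : Prop := forall i, inR D (v i 0).
Definition matR (D : int) (M : 'M[algC]_2) : Prop := forall i j, inR D (M i j).

Definition is_hermitian (M : 'M[algC]_2) : Prop := ctr M = M.
Definition pos_def (M : 'M[algC]_2) : Prop :=
  forall v : 'cV[algC]_2, v != 0 -> 0 < (ctr v *m M *m v) 0 0.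

Definition Qform (M : 'M[algC]_2) (v : 'cV[algC]_2) : algC := (ctr v *m M *m v) 0 0.

Definition orthobalanced (M : 'M[algC]_2) (eps lam : algC) (a1 a2 : 'cV[algC]_2) : Prop :=
  let A := row_mx a1 a2 in
  ctr A *m M *m A = lam *: diag_mx (\row_(i < 2) if i == 0 then 1 else eps).

Definition perp (v : 'cV[algC]_2) : 'cV[algC]_2 :=
  \col_(i < 2) if i == 0 then - (v 1 0)^* else (v 0 0)^*.

Definition of_type (M : 'M[algC]_2) (delta : algC) (a1 a2 : 'cV[algC]_2) : Prop :=
  a2 = delta^-1 *: perp (M *m a1).

(* Hamilton quaternions as pairs (z, w) representing z + w j with z, w in C,
   using j z = conj(z) j and j^2 = -1. *)
Definition quat := (algC * algC)%type.
Definition qmul (p q : quat) : quat :=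
  (p.1 * q.1 - p.2 * q.2^*, p.1 * q.2 + p.2 * q.1^*).
Definition qnorm2 (p : quat) : algC := `|p.1| ^+ 2 + `|p.2| ^+ 2.

Definition inS (D : int) (eps : nat) (u : quat) : Prop :=
  exists r s, inR D r /\ inR D s /\ u = (r, s * sqrtC (eps%:R)).

From mathcomp Require Import all_boot all_order all_algebra algC algnum ring.
Import Order.TTheory GRing.Theory Num.Theory.
Set Implicit Arguments. Unset Strict Implicit. Unset Printing Implicit Defensive.
Local Open Scope ring_scope.

(** For hermitian [M], the vector [b = c (M a)_perp] is automatically Q-orthogonal
    to [a], with [Q b = |c|^2 det M Q a] and [cross a b = c conj (Q a)], where [cross]
    is the determinant of the two columns.  So a basis of type [delta] has
    [|delta|^2 = Delta] and [conj (cross a1 a2) = nu delta], which gives (1).  Writing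
    [a1 = (conj t, conj s)] and [a2 = (-q, conj p)], the remaining conditions become the
    quaternion identities for [u = p + s sqrt(eps) j] and [v = q + t sqrt(eps) j], which
    gives (2).  For (3), let [g] generate the ideal spanned by the entries of [M a1].  The
    Lagrange identity [|<x, a>_M|^2 = Q x Q a - det M |cross x a|^2] shows that
    [|g|^2 / Delta] lies in [R]; being a norm from [K], in a principal ideal domain it
    is a norm [|c|^2] from [R], and [a2 = (c / conj g) (M a1)_perp] is integral. *)


Lemma ord2_cases (i : 'I_2) : i = 0 \/ i = 1.
Proof. by case: i => [[|[|//]] Hi]; [left|right]; apply/val_inj. Qed.

Lemma big_ord2 (V : nmodType) (F : 'I_2 -> V) : \sum_i F i = F 0 + F 1.
Proof. by rewrite !big_ord_recl big_ord0 addr0; congr (F _ + F _); apply/val_inj. Qed.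

Lemma det_mx2 (R : comPzRingType) (M : 'M[R]_2) : \det M = M 0 0 * M 1 1 - M 0 1 * M 1 0.
Proof.
rewrite (expand_det_row _ 0) big_ord2 /cofactor !det_mx11 !mxE /= expr0 expr1.
have -> : lift 0 (0 : 'I_1) = 1 :> 'I_2 by apply/val_inj.
have -> : lift 1 (0 : 'I_1) = 0 :> 'I_2 by apply/val_inj.
by rewrite mul1r mulN1r mulrN.
Qed.

Lemma mulmx_cV2 (R : pzRingType) (M : 'M[R]_2) (a : 'cV[R]_2) i :
  (M *m a) i 0 = M i 0 * a 0 0 + M i 1 * a 1 0.
Proof. by rewrite mxE big_ord2. Qed.

Definition cross (R : pzRingType) (a b : 'cV[R]_2) : R := a 0 0 * b 1 0 - a 1 0 * b 0 0.

(* Stated on [algC] itself: the generic morphism lemmas leave conjugations whose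
   canonical instance no longer matches later rewrites and [ring]. *)
Lemma conjD (x y : algC) : (x + y)^* = x^* + y^*. Proof. exact: rmorphD. Qed.
Lemma conjB (x y : algC) : (x - y)^* = x^* - y^*. Proof. exact: rmorphB. Qed.
Lemma conjN (x : algC) : (- x)^* = - x^*. Proof. exact: rmorphN. Qed.
Lemma conjM (x y : algC) : (x * y)^* = x^* * y^*. Proof. exact: rmorphM. Qed.
Lemma conjV (x : algC) : (x^-1)^* = (x^*)^-1. Proof. exact: fmorphV. Qed.
Lemma conjK (x : algC) : (x^*)^* = x. Proof. exact: conjCK. Qed.
Lemma conj0 : (0 : algC)^* = 0. Proof. exact: rmorph0. Qed.
Lemma conj1 : (1 : algC)^* = 1. Proof. exact: rmorph1. Qed.
Lemma conjn (n : nat) : (n%:R : algC)^* = n%:R. Proof. exact: conjC_nat. Qed.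
Lemma conj_ratr (q : rat) : (ratr q : algC)^* = ratr q.
Proof. by apply/conj_Crat/Crat_rat. Qed.
Definition conjE := (conj_ratr, conjD, conjB, conjN, conjM, conjV, conjK, conj0, conj1, conjn).

Lemma ctrE m n (A : 'M[algC]_(m, n)) i j : ctr A i j = (A j i)^*.
Proof. by rewrite !mxE. Qed.

Definition sform (M : 'M[algC]_2) (a b : 'cV[algC]_2) : algC := (ctr a *m M *m b) 0 0.

Lemma QformE M a : Qform M a = sform M a a.
Proof. by []. Qed.

Lemma sformE M a b :
  sform M a b = (a 0 0)^* * (M *m b) 0 0 + (a 1 0)^* * (M *m b) 1 0.
Proof. by rewrite /sform -mulmxA mxE big_ord2 !ctrE. Qed.

Lemma perpE (v : 'cV[algC]_2) : perp v 0 0 = - (v 1 0)^* /\ perp v 1 0 = (v 0 0)^*.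
Proof. by rewrite !mxE. Qed.

Ltac expand_mx :=
  rewrite ?QformE ?sformE /cross /perp ?det_mx2 ?mxE ?big_ord2 ?mxE /= ?conjE.

Lemma ctr_mulmx_entry n (A B : 'M[algC]_(2, n)) M i j :
  (ctr A *m M *m B) i j = sform M (col i A) (col j B).
Proof.
rewrite /sform -!mulmxA mxE [RHS]mxE big_ord2 [RHS]big_ord2 !mxE.
by rewrite !big_ord2 !mxE.
Qed.

Lemma orthobalancedP M e l a1 a2 :
  orthobalanced M e l a1 a2 <->
  [/\ Qform M a1 = l, sform M a1 a2 = 0, sform M a2 a1 = 0 & Qform M a2 = l * e].
Proof.
have col0 : col 0 (row_mx a1 a2 : 'M_(2, 1 + 1)) = a1.
  by apply/matrixP => i j; rewrite !mxE [j]ord1; case: splitP => k; rewrite [k]ord1.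
have col1 : col 1 (row_mx a1 a2 : 'M_(2, 1 + 1)) = a2.
  by apply/matrixP => i j; rewrite !mxE [j]ord1; case: splitP => k; rewrite [k]ord1.
have dg (i j : 'I_2) : (l *: diag_mx (\row_(k < 2) if k == 0 then 1 else e)) i j
    = if i == j then (if i == 0 then l else l * e) else 0.
  by rewrite !mxE; case: (ord2_cases i) => ->; case: (ord2_cases j) => ->;
     rewrite /= ?mulr1n ?mulr0n ?mulr1 ?mulr0.
rewrite /orthobalanced; split=> [/matrixP H | [h11 h12 h21 h22]].
  have := H 0 0; have := H 0 1; have := H 1 0; have := H 1 1.
  by rewrite !dg !ctr_mulmx_entry col0 col1 /=.
apply/matrixP=> i j; rewrite dg ctr_mulmx_entry.
by case: (ord2_cases i) => ->; case: (ord2_cases j) => ->; rewrite ?col0 ?col1.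
Qed.

Section IntegersOfK.

Variable D : int.

Lemma conj_sqrt_int : (sqrtC (D%:~R : algC))^* = sqrtC D%:~R \/
                      (sqrtC (D%:~R : algC))^* = - sqrtC D%:~R.
Proof.
set s := sqrtC _.
have : (s^* - s) * (s^* + s) = 0.
  by rewrite -subr_sqr -rmorphXn /s sqrtCK rmorph_int subrr.
move/eqP; rewrite mulf_eq0 => /orP[|] /eqP h; [left|right]; apply/eqP.
  by rewrite -subr_eq0 h.
by rewrite -addr_eq0 h.
Qed.

Lemma inK_add x y : inK D x -> inK D y -> inK D (x + y).
Proof.
case=> a [b ->] [c [d ->]]; exists (a + c), (b + d).
by rewrite !rmorphD /=; ring.
Qed.

Lemma inK_opp x : inK D x -> inK D (- x).
Proof.
case=> a [b ->]; exists (- a), (- b).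
by rewrite !rmorphN /=; ring.
Qed.

Lemma inK_mul x y : inK D x -> inK D y -> inK D (x * y).
Proof.
case=> a [b ->] [c [d ->]]; exists (a * c + b * d * D%:~R), (a * d + b * c).
have ss : sqrtC (D%:~R : algC) * sqrtC D%:~R = D%:~R by rewrite -expr2 sqrtCK.
rewrite !rmorphD !rmorphM /= ratr_int; set s := sqrtC _ in ss *; rewrite -ss; ring.
Qed.

Lemma inK_rat q : inK D (ratr q).
Proof. by exists q, 0; rewrite rmorph0 mul0r addr0. Qed.

Lemma inK_conj x : inK D x -> inK D x^*.
Proof.
case=> a [b ->]; rewrite !conjE.
case: conj_sqrt_int => ->; first by exists a, b.
by exists a, (- b); rewrite rmorphN mulNr mulrN.
Qed.

Lemma inK_sqrt : inK D (sqrtC D%:~R).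
Proof. by exists 0, 1; rewrite rmorph0 rmorph1 add0r mul1r. Qed.

Lemma inR_add x y : inR D x -> inR D y -> inR D (x + y).
Proof. by case=> ? ? [? ?]; split; [apply: inK_add | apply: rpredD]. Qed.

Lemma inR_opp x : inR D x -> inR D (- x).
Proof. by case=> ? ?; split; [apply: inK_opp | rewrite rpredN]. Qed.

Lemma inR_sub x y : inR D x -> inR D y -> inR D (x - y).
Proof. by move=> ? ?; apply/inR_add/inR_opp. Qed.

Lemma inR_mul x y : inR D x -> inR D y -> inR D (x * y).
Proof. by case=> ? ? [? ?]; split; [apply: inK_mul | apply: rpredM]. Qed.

Lemma inR_conj x : inR D x -> inR D x^*.
Proof. by case=> ? ?; split; [apply: inK_conj | rewrite (Aint_aut Num.conj)]. Qed.

Lemma inR_int (z : int) : inR D z%:~R.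
Proof. by split; [rewrite -ratr_int; apply: inK_rat | apply: rpred_int]. Qed.

Lemma inR_nat (n : nat) : inR D n%:R.
Proof. by have := inR_int n; rewrite -pmulrn. Qed.

Lemma inR_sqrt : inR D (sqrtC D%:~R).
Proof.
split; first exact: inK_sqrt.
apply: (@root_monic_Aint ('X^2 - (D%:~R)%:P)).
- by rewrite /root !hornerE sqrtCK subrr.
- exact: monicXnsubC.
- by rewrite polyOverXnsubC rpred_int.
Qed.

Lemma inK_denominator x : inK D x -> exists2 k : int, k != 0 & inR D (k%:~R * x).
Proof.
case=> a [b ->]; exists (denq a * denq b); first by rewrite mulf_neq0 ?denq_neq0.
have da : ((denq a)%:~R : algC) != 0 by rewrite intr_eq0 denq_neq0.
have db : ((denq b)%:~R : algC) != 0 by rewrite intr_eq0 denq_neq0.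
have -> : (denq a * denq b)%:~R * (ratr a + ratr b * sqrtC D%:~R)
    = (numq a * denq b)%:~R + (numq b * denq a)%:~R * sqrtC D%:~R :> algC.
  by rewrite !intrM /ratr; field; rewrite da db.
by apply: inR_add; [apply: inR_int | apply: inR_mul; [apply: inR_int | apply: inR_sqrt]].
Qed.

Lemma vecR_col (f : 'I_2 -> algC) : inR D (f 0) -> inR D (f 1) -> vecR D (\col_i f i).
Proof. by move=> ? ? i; rewrite mxE; case: (ord2_cases i) => ->. Qed.

End IntegersOfK.

Ltac inR_closure := repeat first [ assumption
  | match goal with H : vecR _ ?a |- inR _ (?a ?i 0) => exact: H i end
  | match goal with H : matR _ ?M |- inR _ (?M ?i ?j) => exact: H i j end
  | apply: inR_add | apply: inR_sub | apply: inR_mul | apply: inR_opp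
  | apply: inR_conj | apply: inR_nat ].

Lemma sform_inR D M a b : matR D M -> vecR D a -> vecR D b -> inR D (sform M a b).
Proof. by move=> RM Ra Rb; expand_mx; inR_closure. Qed.

Lemma cross_inR D a b : vecR D a -> vecR D b -> inR D (cross a b).
Proof. by move=> Ra Rb; expand_mx; inR_closure. Qed.

Lemma hermitian_entries M : is_hermitian M ->
  [/\ (M 0 0)^* = M 0 0, (M 1 1)^* = M 1 1 & M 1 0 = (M 0 1)^*].
Proof.
move/matrixP=> H; split; first by have := H 0 0; rewrite ctrE.
  by have := H 1 1; rewrite ctrE.
by have := H 0 1; rewrite ctrE => <-; rewrite conjCK.
Qed.

Ltac field_nz := rewrite ?fmorph_eq0; repeat (apply/andP; split); try done.

(* The coordinate form of [u v = nu (beta + delta sqrt(e) j)], [|u|^2 = nu alpha],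
   [|v|^2 = nu gamma] for [u = p + s sqrt(e) j], [v = q + t sqrt(e) j];
   see [S_factors_qmul]. *)
Definition S_factors (M : 'M[algC]_2) (e nu d p s q t : algC) : Prop :=
  [/\ p * q - e * s * t^* = nu * M 0 1, p * t + s * q^* = nu * d,
      p * p^* + e * s * s^* = nu * M 0 0 & q * q^* + e * t * t^* = nu * M 1 1].

Section HermitianForm.

Variable M : 'M[algC]_2.
Hypothesis M_herm : is_hermitian M.

Let M00r : (M 0 0)^* = M 0 0. Proof. by case: (hermitian_entries M_herm). Qed.
Let M11r : (M 1 1)^* = M 1 1. Proof. by case: (hermitian_entries M_herm). Qed.
Let M10E : M 1 0 = (M 0 1)^*. Proof. by case: (hermitian_entries M_herm). Qed.

Let hermE := (M10E, M00r, M11r).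
Local Ltac expand := expand_mx; rewrite ?hermE ?conjE ?hermE.

Lemma Qform_real a : (Qform M a)^* = Qform M a.
Proof. by expand; ring. Qed.

Lemma sform_perp_l c a : sform M a (c *: perp (M *m a)) = 0.
Proof. by expand; ring. Qed.

Lemma sform_perp_r c a : sform M (c *: perp (M *m a)) a = 0.
Proof. by expand; ring. Qed.

Lemma Qform_perp c a :
  Qform M (c *: perp (M *m a)) = c * c^* * \det M * Qform M a.
Proof. by expand; ring. Qed.

Lemma cross_perp c a : cross a (c *: perp (M *m a)) = c * (Qform M a)^*.
Proof. by expand; ring. Qed.

Lemma Lagrange_sform x a :
  sform M x a * (sform M x a)^* =
  Qform M x * Qform M a - \det M * (cross x a * (cross x a)^*).
Proof. by expand; ring. Qed.

Lemma orthobalanced_perp (Dl e lam c : algC) a :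
  \det M = Dl * e -> Qform M a = lam -> c * c^* * Dl = 1 ->
  orthobalanced M e lam a (c *: perp (M *m a)).
Proof.
move=> detM Qa normc; apply/orthobalancedP; split=> //.
- exact: sform_perp_l.
- exact: sform_perp_r.
by rewrite Qform_perp detM Qa mulrA normc mul1r mulrC.
Qed.

Lemma hermitian_det_neq0 : pos_def M -> \det M != 0.
Proof.
move=> Mpos; apply/negP => /eqP detM0.
have Qpos w : w != 0 -> 0 < sform M w w by exact: Mpos.
pose v : 'cV[algC]_2 := \col_i (if i == 0 then M 1 1 else - M 1 0).
have [v0|/Qpos] := eqVneq v 0.
  pose u : 'cV[algC]_2 := \col_i (if i == 0 then 0 else 1).
  have M11_0 : M 1 1 = 0 by move/matrixP: v0 => /(_ 0 0); rewrite !mxE.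
  have /Qpos : u != 0.
    by apply/negP => /eqP/matrixP/(_ 1 0); rewrite !mxE; apply/eqP/oner_neq0.
  by expand; rewrite M11_0 !mul0r !mulr0 !add0r mul1r ltxx.
have -> : sform M v v = M 1 1 * \det M by expand; ring.
by rewrite detM0 mulr0 ltxx.
Qed.

Section Orthobalanced.

Variables (Dl : algC) (eps nu : nat).
Hypothesis detM : \det M = Dl * eps%:R.
Hypotheses (Dl_neq0 : Dl != 0) (eps_gt0 : (0 < eps)%N) (nu_gt0 : (0 < nu)%N).

Let lam := nu%:R * Dl.
Let e := (eps%:R : algC).
Let e_neq0 : e != 0. Proof. by rewrite pnatr_eq0 -lt0n. Qed.
Let nu_neq0 : (nu%:R : algC) != 0. Proof. by rewrite pnatr_eq0 -lt0n. Qed.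
Let neq0_of_norm d : d * d^* = Dl -> d != 0.
Proof. by apply: contra_eq_neq => ->; rewrite mul0r eq_sym. Qed.
Let det_neq0 : M 0 0 * M 1 1 - M 0 1 * (M 0 1)^* != 0.
Proof. by rewrite -M10E -det_mx2 detM mulf_neq0. Qed.

Lemma norm_of_type a1 a2 d :
  orthobalanced M e lam a1 a2 -> of_type M d a1 a2 -> d * d^* = Dl.
Proof.
case/orthobalancedP => Qa1 _ _ + a2E; rewrite a2E Qform_perp detM Qa1 => Qa2.
have lam_e_neq0 : lam * e != 0 by rewrite !mulf_neq0.
have d_neq0 : d != 0.
  by apply: contra_eqN Qa2 => /eqP ->; rewrite invr0 conj0 !mul0r eq_sym.
have normd : d^-1 * (d^-1)^* * Dl = 1.
  by apply: (mulIf lam_e_neq0); rewrite mul1r -[RHS]Qa2 /lam; ring.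
have dd_neq0 : d * d^* != 0 by rewrite mulf_neq0 ?conjC_eq0.
by rewrite -[LHS]mulr1 -normd conjV -invfM mulrA divff ?mul1r.
Qed.

Lemma cross_of_type a1 a2 d :
  orthobalanced M e lam a1 a2 -> of_type M d a1 a2 -> (cross a1 a2)^* = nu%:R * d.
Proof.
move=> ob ty; have normd := norm_of_type ob ty.
have d_neq0 := neq0_of_norm normd.
case/orthobalancedP: ob => Qa1 _ _ _; move: ty; rewrite /of_type => ->.
rewrite cross_perp Qform_real Qa1 /lam -normd !conjE; field; field_nz.
Qed.

Lemma of_type_S_factors a1 a2 d :
  orthobalanced M e lam a1 a2 -> of_type M d a1 a2 ->
  S_factors M e nu%:R d (a2 1 0)^* (a1 1 0)^* (- a2 0 0) (a1 0 0)^*.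
Proof.
move=> ob ty; have normd := norm_of_type ob ty.
have d_neq0 := neq0_of_norm normd.
have crossE := cross_of_type ob ty.
case/orthobalancedP: ob => Qa1 _ _ _; move: ty crossE; rewrite /of_type => ->.
have nuE : nu%:R = Qform M a1 / Dl by rewrite Qa1 /lam mulfK.
have DlE : Dl = (M 0 0 * M 1 1 - M 0 1 * (M 0 1)^*) / e.
  by rewrite -M10E -det_mx2 detM mulfK.
have dcE : d^* = Dl / d by rewrite -normd mulrC mulKf.
split; [|by rewrite -crossE; expand; ring|..];
  by rewrite nuE; expand; rewrite dcE DlE; field; field_nz.
Qed.

Lemma S_factors_of_type d p s q t :
  d * d^* = Dl -> S_factors M e nu%:R d p s q t ->
  let a1 := \col_i (if i == 0 then t^* else s^*) in
  let a2 := \col_i (if i == 0 then - q else p^*) in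
  of_type M d a1 a2 /\ orthobalanced M e lam a1 a2.
Proof.
move=> normd [H01 Hd H00 H11] a1 a2.
have d_neq0 := neq0_of_norm normd.
have M01E : M 0 1 = (p * q - e * s * t^*) / nu%:R by rewrite H01 mulrC mulKf.
have M00E : M 0 0 = (p * p^* + e * s * s^*) / nu%:R by rewrite H00 mulrC mulKf.
have M11E : M 1 1 = (q * q^* + e * t * t^*) / nu%:R by rewrite H11 mulrC mulKf.
have dE : d = (p * t + s * q^*) / nu%:R by rewrite Hd mulrC mulKf.
have pt_neq0 : p * t + s * q^* != 0 by rewrite Hd mulf_neq0.
have ty : of_type M d a1 a2.
  apply/matrixP => i j; rewrite [j]ord1.
  by case: (ord2_cases i) => ->; expand;
    rewrite ?M01E ?M00E ?M11E ?dE ?conjE /e ?conjn; field; field_nz.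
split=> //; rewrite ty; apply: (orthobalanced_perp detM).
  by expand; rewrite /lam -normd ?M01E ?M00E ?M11E ?dE ?conjE /e ?conjn;
    field; field_nz.
by rewrite -normd conjV; field; field_nz.
Qed.

End Orthobalanced.

End HermitianForm.

Lemma S_factors_qmul (M : 'M[algC]_2) (eps : nat) (nu d p s q t : algC) :
  (0 < eps)%N ->
  let r := sqrtC eps%:R in
  S_factors M eps%:R nu d p s q t <->
  [/\ qmul (p, s * r) (q, t * r) = (nu * M 0 1, nu * (d * r)),
      qnorm2 (p, s * r) = M 0 0 * nu & qnorm2 (q, t * r) = M 1 1 * nu].
Proof.
move=> eps_gt0 r.
have r_real : r^* = r by apply/conj_Creal/sqrtC_real; rewrite ler0n.
have rr : r * r = eps%:R by rewrite -expr2 sqrtCK.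
have r_neq0 : r != 0 by apply: contra_eq_neq rr => ->; rewrite mul0r eq_sym pnatr_eq0 -lt0n.
rewrite /S_factors /qmul /qnorm2 /= !normCK !conjE r_real.
have -> : p * q - s * r * (t^* * r) = p * q - eps%:R * s * t^* by rewrite -rr; ring.
have -> : p * (t * r) + s * r * q^* = (p * t + s * q^*) * r by ring.
have -> : p * p^* + s * r * (s^* * r) = p * p^* + eps%:R * s * s^* by rewrite -rr; ring.
have -> : q * q^* + t * r * (t^* * r) = q * q^* + eps%:R * t * t^* by rewrite -rr; ring.
rewrite ![_ * nu]mulrC mulrA; split=> [[-> -> -> ->] // | [[-> /(mulIf r_neq0) ->] -> ->]].
by split.
Qed.

Section ClassNumberOne.

Variable D : int.
Hypothesis cn1 : class_number_one D.

Lemma cnum1_bezout u v : inR D u -> inR D v ->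
  exists g, [/\ inR D g, exists2 q0, inR D q0 & u = g * q0,
    exists2 q1, inR D q1 & v = g * q1
    & exists X Y, [/\ inR D X, inR D Y & g = X * u + Y * v]].
Proof.
move=> Ru Rv.
have Iuv : ideal_of D (fun z => exists X Y, [/\ inR D X, inR D Y & z = X * u + Y * v]).
  split.
  - by move=> z [X [Y [RX RY ->]]]; inR_closure.
  - by exists 0, 0; split; [exact: (inR_nat D 0) | exact: (inR_nat D 0) | ring].
  - move=> x y [X [Y [RX RY ->]]] [X' [Y' [RX' RY' ->]]].
    by exists (X + X'), (Y + Y'); split; [inR_closure | inR_closure | ring].
  - move=> r x Rr [X [Y [RX RY ->]]].
    by exists (r * X), (r * Y); split; [inR_closure | inR_closure | ring].
have [g [Rg gP]] := cn1 Iuv.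
exists g; split=> //.
- have [q0 [Rq0 ->]] : exists q0, inR D q0 /\ u = g * q0.
    by apply/gP; exists 1, 0; split; [exact: (inR_nat D 1) | exact: (inR_nat D 0) | ring].
  by exists q0.
- have [q1 [Rq1 ->]] : exists q1, inR D q1 /\ v = g * q1.
    by apply/gP; exists 0, 1; split; [exact: (inR_nat D 0) | exact: (inR_nat D 1) | ring].
  by exists q1.
by apply/gP; exists 1; split; [exact: (inR_nat D 1) | rewrite mulr1].
Qed.

Lemma cnum1_norm x : inK D x -> inR D (x * x^*) ->
  exists2 c, inR D c & c * c^* = x * x^*.
Proof.
move=> Kx Rn; set n := x * x^* in Rn *.
have [k k_neq0 Rkx] := inK_denominator Kx.
have k_neq0' : (k%:~R : algC) != 0 by rewrite intr_eq0.
have [h [Rh [b Rb kxE] [a Ra kE] [r1 [s1 [Rr1 Rs1 hE]]]]] :=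
  cnum1_bezout Rkx (inR_int D k).
have h_neq0 : h != 0 by apply: contra_neq k_neq0' => h0; rewrite kE h0 mul0r.
have a_neq0 : a != 0 by apply: contra_neq k_neq0' => a0; rewrite kE a0 mulr0.
have coprime_ba : r1 * b + s1 * a = 1.
  by apply: (mulfI h_neq0); rewrite mulr1 [in RHS]hE kxE kE; ring.
have bE : b = a * x by apply: (mulfI h_neq0); rewrite -kxE kE; ring.
(* [c = x^* a^* / a], written so that it visibly lies in [R] *)
pose c := r1 * n * a^* + s1 * b^*.
have cE : c = b^* / a.
  apply: (mulIf a_neq0); rewrite divfK // mulrC /c.
  by rewrite -[RHS]mulr1 -coprime_ba bE /n !conjE; ring.
exists c; first by inR_closure.
by rewrite cE bE /n !conjE; field; field_nz.
Qed.

End ClassNumberOne.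

Lemma orthobalanced_extension D M (Delta : rat) (eps nu : nat) y a1 :
  class_number_one D -> matR D M -> is_hermitian M ->
  \det M = ratr Delta * eps%:R -> (0 < nu)%N -> ratr Delta != 0 :> algC ->
  inK D y -> y * y^* = ratr Delta ->
  vecR D a1 -> Qform M a1 = nu%:R * ratr Delta ->
  exists2 a2, vecR D a2 & orthobalanced M eps%:R (nu%:R * ratr Delta) a1 a2.
Proof.
move=> cn1 RM M_herm detM nu_gt0 Dl_neq0 Ky yyE Ra1 Qa1.
have Delta_neq0 : Delta != 0 by apply: contra_neq Dl_neq0 => ->; rewrite rmorph0.
set Dl := ratr Delta in detM Dl_neq0 yyE Qa1 *.
have y_neq0 : y != 0 by apply: contra_neq Dl_neq0 => y0; rewrite -yyE y0 mul0r.
set w := M *m a1.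
have Rw i : inR D (w i 0) by rewrite mulmx_cV2; inR_closure.
have [g [Rg [q0 Rq0 w0E] [q1 Rq1 w1E] [X [Y [RX RY gE]]]]] :=
  cnum1_bezout cn1 (Rw 0) (Rw 1).
have g_neq0 : g != 0.
  apply: contra_eq_neq Qa1 => g0; rewrite QformE sformE -/w w0E w1E g0 !mul0r !mulr0.
  by rewrite addr0 eq_sym mulf_neq0 // pnatr_eq0 -lt0n.
pose x : 'cV[algC]_2 := \col_i (if i == 0 then X^* else Y^*).
have Rx : vecR D x by apply: vecR_col; inR_closure.
have gE' : g = sform M x a1.
  by rewrite gE sformE; congr (_ * _ + _ * _); rewrite mxE conjK.
have normg : g * g^* / Dl = nu%:R * Qform M x - eps%:R * (cross x a1 * (cross x a1)^*).
  by rewrite gE' Lagrange_sform // Qa1 detM; field.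
pose z := g * y^* / Dl.
have Kz : inK D z.
  apply: inK_mul; first by apply: inK_mul; [exact: Rg.1 | exact: inK_conj].
  by rewrite -fmorphV; apply: inK_rat.
have zzE : z * z^* = g * g^* / Dl.
  by rewrite /z !conjE -/Dl -yyE; field; field_nz.
have [c Rc ccE] : exists2 c, inR D c & c * c^* = z * z^*.
  apply: cnum1_norm => //; rewrite zzE normg.
  have RQx := sform_inR RM Rx Rx; have Rcross := cross_inR Rx Ra1.
  by rewrite -QformE in RQx; inR_closure.
exists ((c / g^*) *: perp w).
  have -> : (c / g^*) *: perp w = \col_i (if i == 0 then - c * q1^* else c * q0^*).
    apply/matrixP => i j; rewrite [j]ord1 mxE [RHS]mxE.
    by case: (ord2_cases i) => -> /=;
      rewrite ?(perpE w).1 ?(perpE w).2 ?w0E ?w1E !conjE; field; field_nz.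
  by apply: vecR_col; inR_closure.
apply: (orthobalanced_perp M_herm detM Qa1).
transitivity (c * c^* * Dl / (g * g^*)); first by rewrite !conjE; field; field_nz.
by rewrite ccE zzE; field; field_nz.
Qed.

Lemma orthobalanced_type_quaternionP D M Dl (eps nu : nat) d :
  is_hermitian M -> \det M = Dl * eps%:R -> Dl != 0 -> (0 < eps)%N -> (0 < nu)%N ->
  d * d^* = Dl ->
  (exists a1 a2, [/\ vecR D a1, vecR D a2,
      orthobalanced M eps%:R (nu%:R * Dl) a1 a2 & of_type M d a1 a2]) <->
  (exists u v, [/\ inS D eps u, inS D eps v,
      qmul u v = (nu%:R * M 0 1, nu%:R * (d * sqrtC eps%:R)),
      qnorm2 u = M 0 0 * nu%:R & qnorm2 v = M 1 1 * nu%:R]).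
Proof.
move=> M_herm detM Dl_neq0 eps_gt0 nu_gt0 normd; split.
  case=> a1 [a2 [Ra1 Ra2 ob ty]].
  have := of_type_S_factors M_herm detM Dl_neq0 eps_gt0 nu_gt0 ob ty.
  case/(S_factors_qmul _ _ _ _ _ _ _ eps_gt0) => qm qu qv.
  exists ((a2 1 0)^*, (a1 1 0)^* * sqrtC eps%:R).
  exists (- a2 0 0, (a1 0 0)^* * sqrtC eps%:R).
  split=> //.
    by exists (a2 1 0)^*, (a1 1 0)^*; split; [|split]; inR_closure.
  by exists (- a2 0 0), (a1 0 0)^*; split; [|split]; inR_closure.
case=> _ [_ [[p [s [Rp [Rs ->]]]] [q [t [Rq [Rt ->]]]] qm qu qv]].
have /(S_factors_of_type M_herm detM Dl_neq0 nu_gt0 normd) [ty ob] :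
    S_factors M eps%:R nu%:R d p s q t by apply/S_factors_qmul.
exists (\col_i (if i == 0 then t^* else s^*)), (\col_i (if i == 0 then - q else p^*)).
by split=> //; apply: vecR_col => /=; inR_closure.
Qed.

Theorem mainTheorem11 (D : int) (M : 'M[algC]_2) (Delta : rat) (eps nu : nat) :
  admissible_param D ->
  matR D M -> is_hermitian M -> pos_def M ->
  abs_square D Delta ->
  (0 < eps)%N ->
  (forall m : nat, (0 < m)%N -> (m %| eps)%N -> abs_square D m%:Q -> m = 1%N) ->
  \det M = ratr Delta * eps%:R ->
  (0 < nu)%N ->
  let lam := nu%:R * ratr Delta in
  let alpha := M 0 0 in
  let beta := M 0 1 in
  let gamma := M 1 1 in
  (* (1) *)
  (forall (a1 a2 : 'cV[algC]_2) (delta : algC),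
      vecR D a1 -> vecR D a2 -> orthobalanced M eps%:R lam a1 a2 ->
      inK D delta -> of_type M delta a1 a2 ->
      inR D (nu%:R * delta))
  /\
  (* (2) *)
  (forall delta : algC,
      inR D (nu%:R * delta) -> `|delta| ^+ 2 = ratr Delta ->
      ((exists a1 a2 : 'cV[algC]_2,
          [/\ vecR D a1, vecR D a2, orthobalanced M eps%:R lam a1 a2
            & of_type M delta a1 a2])
       <->
       (exists u v : quat,
          [/\ inS D eps u, inS D eps v,
              qmul u v = (nu%:R * beta, nu%:R * (delta * sqrtC eps%:R)),
              qnorm2 u = alpha * nu%:R & qnorm2 v = gamma * nu%:R])))
  /\
  (* (3) *)
  (class_number_one D ->
   forall a1 : 'cV[algC]_2, vecR D a1 -> Qform M a1 = lam ->
     exists a2 : 'cV[algC]_2, vecR D a2 /\ orthobalanced M eps%:R lam a1 a2).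
Proof.
move=> _ RM M_herm M_pos [y [Ky yE]] eps_gt0 _ detM nu_gt0 lam alpha beta gamma.
have Dl_neq0 : ratr Delta != 0 :> algC.
  by apply: contra_neq (hermitian_det_neq0 M_herm M_pos) => D0; rewrite detM D0 mul0r.
split; [|split].
- move=> a1 a2 d Ra1 Ra2 ob _ ty.
  rewrite -(cross_of_type M_herm detM Dl_neq0 eps_gt0 nu_gt0 ob ty).
  exact/inR_conj/cross_inR.
- move=> d _; rewrite normCK => normd.
  exact: orthobalanced_type_quaternionP.
move=> cn1 a1 Ra1 Qa1.
rewrite normCK in yE.
have [a2 Ra2 ob] :=
  orthobalanced_extension cn1 RM M_herm detM nu_gt0 Dl_neq0 Ky (esym yE) Ra1 Qa1.
by exists a2.
Qed.
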